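(* Let $T \subseteq \mathbb{Z}_2^\omega$ be a thin set. Then there exists a maximal (with respect to inclusion) thin set $T_0 \subseteq \mathbb{Z}_2^\omega$ such that $T \subseteq T_0$. Moreover, for every equivalence class $Q$ of the relation $\sim$ on $\mathbb{Z}_2^\omega$, the set $T_0 \cap Q$ is a maximal thin subset of $Q$.
   Context: $\mathbb{Z}_2^\omega$ is the set of all infinite binary sequences indexed by $\omega=\{0,1,2,\dots\}$. The Hamming distance is $\mathrm{hd}(x,y)=|\{k : x(k)\neq y(k)\}|\in\omega\cup\{\omega\}$, and $x\sim y$ iff $\mathrm{hd}(x,y)$ is finite. A set $T\subseteq \mathbb{Z}_2^\omega$ is thin if for every $n\in\omega$ the restriction to $T$ of the projection $x\mapsto x|_{\omega\setminus\{n\}}$ is injective (equivalently, no two distinct elements of $T$ differ in exactly one coordinate). *)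

From Stdlib Require Import List.

Definition seq2 := nat -> bool.
Definition subset2 := seq2 -> Prop.

Definition incl2 (A B : subset2) : Prop := forall x, A x -> B x.

(* x ~ y : finite Hamming distance, i.e. they differ on a finite set of coordinates *)
Definition hsim (x y : seq2) : Prop :=
  exists l : list nat, forall k, x k <> y k -> In k l.

(* T is thin: for every n, the projection forgetting coordinate n is injective on T *)
Definition thin (T : subset2) : Prop :=
  forall (n : nat) (x y : seq2), T x -> T y ->
    (forall k, k <> n -> x k = y k) -> x = y.

Definition maximal_thin_in (A T0 : subset2) : Prop :=
  incl2 T0 A /\ thin T0 /\
  forall S, incl2 S A -> thin S -> incl2 T0 S -> incl2 S T0.

Definition everything : subset2 := fun _ => True.

Definition hclass (x : seq2) : subset2 := fun y => hsim x y.

Definition inter2 (A B : subset2) : subset2 := fun x => A x /\ B x.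

(** Zorn's lemma extends [T] to a maximal thin set [T0]. A class [Q] of [~] is
    closed under changing one coordinate, so two elements of [T0 ∪ S], for a thin
    [S ⊆ Q] containing [T0 ∩ Q], that differ in exactly one coordinate either both
    lie in [T0] or both lie in [S]. Hence [T0 ∪ S] is thin, and maximality of [T0]
    forces [S ⊆ T0]. *)

From Stdlib Require Import List.
From mathcomp Require Import all_boot.
From mathcomp Require Import boolp classical_sets.

Local Open Scope classical_set_scope.

Definition agree_off (n : nat) (x y : seq2) : Prop := forall k, k <> n -> x k = y k.

Definition agree_off_closed (Q : subset2) : Prop :=
  forall n x y, Q x -> agree_off n x y -> Q y.

Lemma agree_off_sym {n x y} : agree_off n x y -> agree_off n y x.
Proof. by move=> xy k /xy ->. Qed.

Lemma hsim_agree_off n x y : agree_off n x y -> hsim x y.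
Proof.
move=> xy; exists [:: n] => k xyk; left.
by apply: contrapT => /nesym /xy.
Qed.

Lemma hsim_trans x y z : hsim x y -> hsim y z -> hsim x z.
Proof.
move=> [l1 xy] [l2 yz]; exists (l1 ++ l2) => k xzk; apply/in_or_app.
have [xyk | /xy] := Bool.bool_dec (x k) (y k); last by left.
by right; apply: yz; rewrite -xyk.
Qed.

Lemma agree_off_closed_hclass x : agree_off_closed (hclass x).
Proof. by move=> n y z xy /hsim_agree_off; apply: hsim_trans. Qed.

(* [Zorn_bigcup] needs its property to hold for the union of the empty chain, so [T]
   is adjoined to the candidates instead of being required to lie in them. *)
Lemma Zorn_thin_setU (T : subset2) :
  thin T -> exists A : set seq2, thin (fun x => T x \/ A x) /\
    forall B, A `<` B -> ~ thin (fun x => T x \/ B x).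
Proof.
move=> thT; apply: Zorn_bigcup => F Fthin Fchain n x y.
case=> [Tx | [X FX Xx]] [Ty | [Y FY Yy]].
- exact: thT.
- by apply: (Fthin Y FY n) => //; [left | right].
- by apply: (Fthin X FX n) => //; [right | left].
- have [XY | YX] := Fchain X Y FX FY.
  + by apply: (Fthin Y FY n); right => //; apply: XY.
  + by apply: (Fthin X FX n); right => //; apply: YX.
Qed.

Lemma exists_maximal_thin (T : subset2) :
  thin T -> exists T0, incl2 T T0 /\ maximal_thin_in everything T0.
Proof.
move=> /Zorn_thin_setU [A [thTA Amax]].
exists (fun x => T x \/ A x); split; first by move=> x; left.
split=> //; split=> // S _ thS TAS x Sx; apply: contrapT => TAx.
apply: (Amax S).
- split; first by move=> y Ay; apply: TAS; right.
  by move=> SA; apply: TAx; right; apply: SA.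
- move=> n u v Su Sv; apply: (thS n).
  + by case: Su => // Tu; apply: TAS; left.
  + by case: Sv => // Tv; apply: TAS; left.
Qed.

Lemma thin_setU_class {Q T0 S : subset2} :
  agree_off_closed Q -> thin T0 -> incl2 S Q -> thin S -> incl2 (inter2 T0 Q) S ->
  thin (fun x => S x \/ T0 x).
Proof.
move=> Qclosed thT0 SQ thS T0QS n x y [Sx | T0x] [Sy | T0y] xy.
- exact: (thS n).
- apply: (thS n) => //; apply: (T0QS y); split => //.
  exact: (Qclosed n x y (SQ x Sx) xy).
- apply: (thS n) => //; apply: (T0QS x); split => //.
  exact: (Qclosed n y x (SQ y Sy) (agree_off_sym xy)).
- exact: (thT0 n).
Qed.

Lemma maximal_thin_inter (Q T0 : subset2) :
  agree_off_closed Q -> maximal_thin_in everything T0 ->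
  maximal_thin_in Q (inter2 T0 Q).
Proof.
move=> Qclosed [_ [thT0 T0max]]; split; first by move=> x [].
split; first by move=> n x y [T0x _] [T0y _]; apply: (thT0 n).
move=> S SQ thS T0QS x Sx; split; last exact: SQ.
apply: (T0max (fun x => S x \/ T0 x)) => //; last by left.
- exact: (thin_setU_class Qclosed thT0 SQ thS T0QS).
- by move=> y; right.
Qed.

Theorem proposition3 (T : subset2) :
  thin T ->
  exists T0 : subset2,
    incl2 T T0 /\
    maximal_thin_in everything T0 /\
    (forall x : seq2, maximal_thin_in (hclass x) (inter2 T0 (hclass x))).
Proof.
move=> /exists_maximal_thin [T0 [TT0 T0max]].
exists T0; split=> //; split=> // x.
exact: maximal_thin_inter (agree_off_closed_hclass x) T0max.
Qed.
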